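(* Let $n>1$, let $G_1,\dots,G_n$ be finite simple graphs and $G=G_1\,\square\,\cdots\,\square\,G_n$ their Cartesian product. (1) If for each $i$ there is an automorphism $\sigma_i$ of $G_i$ of order $2$ with $\sigma_i(v)\neq v$ and $v\sigma_i(v)\notin E(G_i)$ for all $v\in V(G_i)$, then $G$ is a $\mathcal{P}$ position for Grim. (2) If for each $i$, $G_i$ has no isolated vertices and there is an automorphism $\sigma_i$ of $G_i$ of order $2$ fixing exactly one vertex of $G_i$ and with $v\sigma_i(v)\notin E(G_i)$ for all $v\in V(G_i)$, then $G$ is an $\mathcal{N}$ position for Grim.
   Context: Grim is a two-player game on a finite simple undirected graph. Any isolated vertices of the starting graph are deleted before play begins. Players alternate moves; a move consists of selecting a vertex of the current graph and deleting it together with all its incident edges, after which every vertex that has become isolated is also deleted. The player who makes the last legal move wins (a player facing the empty graph has no move and loses). A graph is an $\mathcal{N}$ position if the player about to move has a winning strategy, and a $\mathcal{P}$ position otherwise. The Cartesian product $G\square H$ has vertex set $V(G)\times V(H)$, with $(x,y)$ adjacent to $(w,z)$ iff either $x=w$ and $yz\in E(H)$, or $y=z$ and $xw\in E(G)$; the iterated product is defined analogously. *)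

From mathcomp Require Import all_boot all_fingroup.
Set Implicit Arguments. Unset Strict Implicit. Unset Printing Implicit Defensive.

Definition simple_graph (T : finType) (e : rel T) : Prop :=
  symmetric e /\ irreflexive e.

(* Positions of Grim on a graph (T, e): the current graph is the subgraph
   induced on a vertex set S : {set T} (with no isolated vertices). *)

Definition grim_start (T : finType) (e : rel T) : {set T} :=
  [set u | [exists w, e u w]].

Definition grim_move (T : finType) (e : rel T) (S : {set T}) (v : T) : {set T} :=
  [set u in S :\ v | [exists w in S :\ v, e u w]].

(* N / P positions (normal play), defined inductively; since every move
   strictly decreases the vertex set, this is the usual game-theoretic
   classification. *)
Inductive grim_P (T : finType) (e : rel T) : {set T} -> Prop :=
  | grimP_intro (S : {set T}) : (forall v, v \in S -> grim_N e (grim_move e S v)) -> grim_P e S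
with grim_N (T : finType) (e : rel T) : {set T} -> Prop :=
  | grimN_intro (S : {set T}) (v : T) : v \in S -> grim_P e (grim_move e S v) -> grim_N e S.

Definition cart_prod_rel (n : nat) (T : 'I_n -> finType)
    (e : forall i, rel (T i)) : rel {dffun forall i : 'I_n, T i} :=
  fun x y => [exists i : 'I_n, e i (x i) (y i) &&
                 [forall j : 'I_n, (j != i) ==> (x j == y j)]].

Definition graph_aut (T : finType) (e : rel T) (s : {perm T}) : Prop :=
  forall u v, e (s u) (s v) = e u v.

(* Mirror strategy.  The product map sigma = (sigma_1, ..., sigma_n) is an involutive
   automorphism of G with v sigma(v) never an edge.  On a position S that is
   sigma-stable, fixed-point free and without isolated vertices, the second player
   answers every move v by sigma(v): this is legal because v is not adjacent to
   sigma(v), and the resulting position has the same three properties, so the second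
   player never runs out of moves.  In (1) sigma has no fixed point, so the start is a
   P position; in (2) its unique fixed point (c_1, ..., c_n) is not isolated, and
   deleting it leaves such a position, so the first player wins. *)

From mathcomp Require Import all_boot all_fingroup.
Set Implicit Arguments. Unset Strict Implicit. Unset Printing Implicit Defensive.

Section NonIsolated.
Variables (T : finType) (e : rel T).
Hypothesis e_sym : symmetric e.

Definition nonisolated (A : {set T}) : {set T} := [set u in A | [exists w in A, e u w]].

Lemma grim_moveE (S : {set T}) v : grim_move e S v = nonisolated (S :\ v).
Proof. by []. Qed.

Lemma grim_startE : grim_start e = nonisolated setT.
Proof. by apply/setP=> u; rewrite !inE /=; apply: eq_existsb => w; rewrite inE. Qed.

Lemma nonisolated_sub (A : {set T}) : nonisolated A \subset A.
Proof. by apply/subsetP=> u; rewrite inE => /andP[]. Qed.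

Lemma nonisolated_setD (A B : {set T}) :
  nonisolated (nonisolated A :\: B) = nonisolated (A :\: B).
Proof.
apply/setP=> u; rewrite !inE; apply/idP/idP.
  case/andP=> /and3P[uB uA _] /existsP[w]; rewrite !inE => /andP[/and3P[wB wA _] euw].
  by rewrite uB uA; apply/existsP; exists w; rewrite !inE wB wA.
case/andP=> /andP[uB uA] /existsP[w]; rewrite !inE => /andP[/andP[wB wA] euw].
rewrite uB uA; apply/andP; split; apply/existsP; exists w; rewrite ?inE ?wB ?wA //=.
by rewrite euw andbT; apply/existsP; exists u; rewrite uA e_sym.
Qed.

Lemma nonisolated_id (A : {set T}) : nonisolated (nonisolated A) = nonisolated A.
Proof. by have := nonisolated_setD A set0; rewrite !setD0. Qed.

Lemma grim_move2E (S : {set T}) v v' :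
  grim_move e (grim_move e S v) v' = nonisolated (S :\ v :\ v').
Proof. by rewrite !grim_moveE nonisolated_setD. Qed.

Section MirrorStrategy.
Variable sg : T -> T.
Hypothesis sgK : involutive sg.
Hypothesis sg_aut : forall u w, e (sg u) (sg w) = e u w.
Hypothesis sg_nonadj : forall u, ~~ e u (sg u).

Let sg_inj : injective sg := inv_inj sgK.

Definition sg_stable (A : {set T}) : Prop := forall u, u \in A -> sg u \in A.

Definition mirror_position (S : {set T}) : Prop :=
  [/\ sg_stable S, forall u, u \in S -> sg u != u & nonisolated S = S].

Lemma nonisolated_stable (A : {set T}) : sg_stable A -> sg_stable (nonisolated A).
Proof.
move=> Ast u; rewrite !inE => /andP[uA /existsP[w /andP[wA euw]]].
by rewrite Ast //; apply/existsP; exists (sg w); rewrite Ast // sg_aut.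
Qed.

Lemma stable_setD2 (A : {set T}) v : sg_stable A -> sg_stable (A :\ v :\ sg v).
Proof.
move=> Ast u; rewrite !inE => /and3P[uv' uv uA].
by rewrite (inj_eq sg_inj) uv -[X in sg u != X]sgK (inj_eq sg_inj) uv' Ast.
Qed.

Lemma stable_setD1 (A : {set T}) v : sg v = v -> sg_stable A -> sg_stable (A :\ v).
Proof.
move=> fix_v Ast u; rewrite !inE => /andP[uv uA].
by rewrite -{1}fix_v (inj_eq sg_inj) uv Ast.
Qed.

Lemma mirror_move_legal (S : {set T}) v :
  mirror_position S -> v \in S -> sg v \in grim_move e S v.
Proof.
case=> Sst Sfree Snoniso vS; have svS := Sst _ vS.
move: (svS); rewrite -{1}Snoniso !inE (Sfree _ vS) => /andP[_ /existsP[w /andP[wS ew]]].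
rewrite svS /=; apply/existsP; exists w; rewrite !inE wS ew !andbT.
by apply: contraTneq ew => ->; rewrite e_sym (negbTE (sg_nonadj v)).
Qed.

Lemma mirror_position_move2 (S : {set T}) v :
  mirror_position S -> mirror_position (grim_move e (grim_move e S v) (sg v)).
Proof.
case=> Sst Sfree _; rewrite grim_move2E; split.
- exact/nonisolated_stable/stable_setD2.
- by move=> u /(subsetP (nonisolated_sub _)); rewrite !inE => /and3P[_ _ /Sfree].
- exact: nonisolated_id.
Qed.

Lemma mirror_position_P (S : {set T}) : mirror_position S -> grim_P e S.
Proof.
elim: {S}_.+1 {-2}S (ltnSn #|S|) => // k IH S leSk mS.
constructor=> v vS; apply: (grimN_intro (mirror_move_legal mS vS)).
apply/IH/mirror_position_move2 => //; rewrite grim_move2E.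
rewrite -ltnS (leq_trans _ leSk) // ltnS.
apply: leq_ltn_trans (subset_leq_card (nonisolated_sub _)) _.
by rewrite (cardsD1 v S) vS ltnS; apply/subset_leq_card/subD1set.
Qed.

Lemma setT_stable : sg_stable setT.
Proof. by move=> u; rewrite inE. Qed.

Lemma grim_start_mirror_P : (forall u, sg u != u) -> grim_P e (grim_start e).
Proof.
move=> sg_free; apply: mirror_position_P; rewrite grim_startE; split => //.
- exact/nonisolated_stable/setT_stable.
- exact: nonisolated_id.
Qed.

Lemma grim_start_mirror_N x0 :
  (forall u, (sg u == u) = (u == x0)) -> (exists w, e x0 w) -> grim_N e (grim_start e).
Proof.
move=> fixE [w ew]; have sx0 : sg x0 = x0 by apply/eqP; rewrite fixE.
apply: (@grimN_intro _ _ _ x0); first by rewrite inE; apply/existsP; exists w.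
apply: mirror_position_P; rewrite grim_startE grim_moveE nonisolated_setD; split.
- exact/nonisolated_stable/stable_setD1/setT_stable.
- by move=> u /(subsetP (nonisolated_sub _)); rewrite !inE fixE => /andP[].
- exact: nonisolated_id.
Qed.
End MirrorStrategy.
End NonIsolated.

Lemma perm_order2K (U : finType) (p : {perm U}) : #[p]%g = 2 -> involutive p.
Proof.
move=> p2 u; have := expg_order p; rewrite p2 => /(congr1 (fun q : {perm U} => q u)).
by rewrite permX perm1.
Qed.

Unset Implicit Arguments.

Section CartesianProduct.
Variables (n : nat) (T : 'I_n -> finType) (e : forall i, rel (T i)).
Hypothesis e_sym : forall i, symmetric (e i).

Lemma cart_prod_rel_sym : symmetric (cart_prod_rel e).
Proof.
move=> x y; apply/existsP/existsP=> -[i /andP[exy /forallP xy]]; exists i.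
all: rewrite e_sym exy; apply/forallP=> j; apply/implyP=> /(implyP (xy j)); by rewrite eq_sym.
Qed.

Lemma cart_prod_rel_dfwith (x : {dffun forall i, T i}) i (w : T i) :
  e i (x i) w -> cart_prod_rel e x (finfun (dfwith x w)).
Proof.
move=> exw; apply/existsP; exists i; rewrite ffunE dfwith_in exw /=.
by apply/forallP=> j; apply/implyP=> ji; rewrite ffunE dfwith_out // eq_sym.
Qed.

Variable s : forall i, T i -> T i.
Hypothesis sK : forall i, involutive (s i).
Hypothesis s_aut : forall i u w, e i (s i u) (s i w) = e i u w.
Hypothesis s_nonadj : forall i u, ~~ e i u (s i u).

Definition cart_prod_map (x : {dffun forall i, T i}) : {dffun forall i, T i} :=
  finfun (fun i => s i (x i)).

Lemma cart_prod_mapE (x : {dffun forall i, T i}) i : cart_prod_map x i = s i (x i).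
Proof. exact: ffunE. Qed.

Lemma cart_prod_map_involutive : involutive cart_prod_map.
Proof. by move=> x; apply/ffunP=> i; rewrite !cart_prod_mapE sK. Qed.

Lemma cart_prod_map_aut x y :
  cart_prod_rel e (cart_prod_map x) (cart_prod_map y) = cart_prod_rel e x y.
Proof.
apply: eq_existsb => i; rewrite !cart_prod_mapE s_aut; congr (_ && _).
by apply: eq_forallb => j; rewrite !cart_prod_mapE (inj_eq (inv_inj (sK j))).
Qed.

Lemma cart_prod_map_nonadj x : ~~ cart_prod_rel e x (cart_prod_map x).
Proof.
apply/existsP=> -[i /andP[exsx _]].
by move: (s_nonadj i (x i)); rewrite -cart_prod_mapE exsx.
Qed.

Lemma cart_prod_map_fixE (x : {dffun forall i, T i}) :
  (cart_prod_map x == x) = [forall i, s i (x i) == x i].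
Proof.
apply/eqP/forallP=> [sx i | sx]; last by apply/ffunP=> i; rewrite cart_prod_mapE; exact/eqP.
by rewrite -cart_prod_mapE sx.
Qed.

Lemma cart_prod_mirror_P i0 :
  (forall v, s i0 v != v) -> grim_P (cart_prod_rel e) (grim_start (cart_prod_rel e)).
Proof.
move=> s_free; apply: (grim_start_mirror_P cart_prod_rel_sym cart_prod_map_involutive
  cart_prod_map_aut cart_prod_map_nonadj) => x.
by rewrite cart_prod_map_fixE negb_forall; apply/existsP; exists i0.
Qed.

Lemma cart_prod_mirror_N i0 (c : {dffun forall i, T i}) :
    (forall i v, (s i v == v) = (v == c i)) -> (exists w, e i0 (c i0) w) ->
  grim_N (cart_prod_rel e) (grim_start (cart_prod_rel e)).
Proof.
move=> fixE [w ew]; apply: (grim_start_mirror_N cart_prod_rel_sym cart_prod_map_involutive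
  cart_prod_map_aut cart_prod_map_nonadj (x0 := c)); last first.
  by exists (finfun (dfwith c w)); exact: cart_prod_rel_dfwith ew.
move=> x; rewrite cart_prod_map_fixE; apply/forallP/eqP=> [xfix | -> i].
  by apply/ffunP=> i; apply/eqP; rewrite -fixE.
by rewrite fixE.
Qed.
End CartesianProduct.
Theorem corollary4p6 (n : nat) (T : 'I_n -> finType) (e : forall i, rel (T i)) :
  1 < n ->
  (forall i, simple_graph (e i)) ->
  ((forall i, exists s : {perm T i},
       [/\ graph_aut (e i) s, #[s]%g = 2,
           forall v, s v != v &
           forall v, ~~ e i v (s v)]) ->
     grim_P (cart_prod_rel e) (grim_start (cart_prod_rel e)))
  /\
  ((forall i, (forall v : T i, exists w, e i v w) /\
     exists s : {perm T i},
       [/\ graph_aut (e i) s, #[s]%g = 2,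
           #|[set v | s v == v]| = 1 &
           forall v, ~~ e i v (s v)]) ->
     grim_N (cart_prod_rel e) (grim_start (cart_prod_rel e))).
Proof.
move=> n_gt1 e_simple; pose i0 : 'I_n := Ordinal (ltnW n_gt1).
have e_sym i : symmetric (e i) := proj1 (e_simple i).
split=> [/fin_all_exists[s s_spec] | /all_and2[e_total /fin_all_exists[s s_spec]]].
all: have sK i : involutive (s i) by case: (s_spec i) => _ /perm_order2K.
all: have s_aut i : graph_aut (e i) (s i) by case: (s_spec i).
all: have s_nonadj i : forall v, ~~ e i v (s i v) by case: (s_spec i).
  apply: (cart_prod_mirror_P _ _ _ e_sym (fun i => s i) sK s_aut s_nonadj i0).
  by case: (s_spec i0).
have /fin_all_exists[c c_fix] i : exists c, [set v | s i v == v] = [set c].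
  by apply/cards1P; case: (s_spec i) => _ _ -> _.
apply: (cart_prod_mirror_N _ _ _ e_sym (fun i => s i) sK s_aut s_nonadj i0 (finfun c)).
  by move=> i v; rewrite ffunE; have /setP/(_ v) := c_fix i; rewrite !inE.
by rewrite ffunE; exact: e_total.
Qed.
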